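(* Let $l<u$ be real, let $\Delta Q$ be real with $0<\Delta Q\le u-l$, and let $\epsilon\ge0$, $0\le\delta<1$ with $\frac{e^\epsilon}{1-\delta}>1$ (i.e. $\epsilon$ and $\delta$ not both zero). Let $b_0=\frac{\Delta Q}{\epsilon-\log(1-\delta)}$. Then $1\le \Delta C(b_0)<\frac{e^\epsilon}{1-\delta}$; in particular $\epsilon-\log\Delta C(b_0)-\log(1-\delta)>0$, so $f(b_0)$ is a well-defined positive number, and $f(b_0)\ge b_0$. Moreover $f(b_0)=b_0$ if and only if $\Delta Q=u-l$.
   Context: For $b>0$ and $p\in[l,u]$, $C_p(b)= 1-\frac12\left(e^{-\frac{p-l}{b}}+e^{-\frac{u-p}{b}}\right)$ (the integral $\int_l^u\frac{1}{2b}e^{-|x-p|/b}dx$), and $\Delta C(b)=\frac{C_{l+\Delta Q}(b)}{C_l(b)}$. The map $f$ is defined for $b>0$ with $\epsilon-\log\Delta C(b)-\log(1-\delta)\neq 0$ by $f(b)=\frac{\Delta Q}{\epsilon-\log\Delta C(b)-\log(1-\delta)}$. *)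

From Stdlib Require Import Reals Lra.
Open Scope R_scope.

(* C_p(b) = 1 - 1/2 (exp(-(p-l)/b) + exp(-(u-p)/b)), the Laplace(p,b) mass of [l,u]. *)
Definition Cp (l u p b : R) : R :=
  1 - / 2 * (exp (- (p - l) / b) + exp (- (u - p) / b)).

Definition DeltaC (l u dQ b : R) : R := Cp l u (l + dQ) b / Cp l u l b.

Definition f_map (l u dQ eps delta b : R) : R :=
  dQ / (eps - ln (DeltaC l u dQ b) - ln (1 - delta)).

(* Put a = exp (-dQ/b) and c = exp (-(u-l)/b).  Then DeltaC(b) is the
   algebraic expression (2 - a - c/a)/(1 - c), which for 0 < c <= a < 1 lies in
   [1, 1/a) and equals 1 exactly when c = a, i.e. dQ = u - l.  At b0 = dQ/L with
   L = eps - ln(1 - delta) > 0 one has 1/a = exp L = e^eps/(1 - delta), so the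
   denominator of f(b0) is L - ln DeltaC(b0), which lies in (0, L]; hence
   f(b0) >= dQ/L = b0 with equality iff ln DeltaC(b0) = 0. *)

From Stdlib Require Import Reals Lra.
Open Scope R_scope.

Definition laplace_ratio (a c : R) : R := (2 - a - c / a) / (1 - c).

Section LaplaceRatio.

Variables a c : R.
Hypotheses (Ha0 : 0 < a) (Ha1 : a < 1) (Hc0 : 0 < c) (Hca : c <= a).

Let denom_pos : 0 < a * (1 - c).
Proof. nra. Qed.

Lemma laplace_ratio_sub1 :
  (laplace_ratio a c - 1) * (a * (1 - c)) = (1 - a) * (a - c).
Proof. unfold laplace_ratio; field; lra. Qed.

Lemma laplace_ratio_ge1 : 1 <= laplace_ratio a c.
Proof. assert (E := laplace_ratio_sub1); assert (P := denom_pos); nra. Qed.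

Lemma laplace_ratio_lt_inv : laplace_ratio a c < / a.
Proof.
  assert (E : (/ a - laplace_ratio a c) * (a * (1 - c)) = (1 - a) * (1 - a)).
  { unfold laplace_ratio; field; lra. }
  assert (P := denom_pos); nra.
Qed.

Lemma laplace_ratio_eq1 : laplace_ratio a c = 1 <-> c = a.
Proof.
  assert (E := laplace_ratio_sub1).
  split; intro H.
  - rewrite H, Rminus_diag, Rmult_0_l in E; nra.
  - subst c; nra.
Qed.

End LaplaceRatio.

Lemma DeltaC_laplace_ratio (l u dQ b : R) : 0 < b -> l < u ->
  DeltaC l u dQ b = laplace_ratio (exp (- dQ / b)) (exp (- (u - l) / b)).
Proof.
  intros Hb Hlu.
  assert (Hc1 : exp (- (u - l) / b) < 1).
  { rewrite <- exp_0; apply exp_increasing, Rdiv_neg_pos; lra. }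
  unfold DeltaC, Cp, laplace_ratio.
  replace (- (l - l) / b) with 0 by (field; lra).
  replace (- (l + dQ - l) / b) with (- dQ / b) by (field; lra).
  replace (- (u - (l + dQ)) / b) with (- (u - l) / b + - (- dQ / b)) by (field; lra).
  rewrite exp_0, exp_plus, exp_Ropp.
  assert (0 < exp (- dQ / b)) by apply exp_pos.
  field; lra.
Qed.

Section DeltaCBounds.

Variables l u dQ b : R.
Hypotheses (Hb : 0 < b) (HdQ0 : 0 < dQ) (HdQu : dQ <= u - l).

Let Hlu : l < u.
Proof. lra. Qed.

Let shift_lt1 : exp (- dQ / b) < 1.
Proof. rewrite <- exp_0; apply exp_increasing, Rdiv_neg_pos; lra. Qed.

Let spread_le_shift : exp (- (u - l) / b) <= exp (- dQ / b).
Proof.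
  destruct HdQu as [Hlt | ->]; [left | right; reflexivity].
  apply exp_increasing; unfold Rdiv; apply Rmult_lt_compat_r;
    [apply Rinv_0_lt_compat |]; lra.
Qed.

Lemma DeltaC_ge1 : 1 <= DeltaC l u dQ b.
Proof.
  rewrite DeltaC_laplace_ratio by assumption.
  apply laplace_ratio_ge1; auto using exp_pos.
Qed.

Lemma DeltaC_lt_exp : DeltaC l u dQ b < exp (dQ / b).
Proof.
  rewrite DeltaC_laplace_ratio, <- (Rinv_inv (exp (dQ / b))), <- exp_Ropp,
    <- Rdiv_opp_l by assumption.
  apply laplace_ratio_lt_inv; auto using exp_pos.
Qed.

Lemma DeltaC_eq1 : DeltaC l u dQ b = 1 <-> dQ = u - l.
Proof.
  rewrite DeltaC_laplace_ratio, laplace_ratio_eq1 by auto using exp_pos.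
  split; intro H.
  - apply exp_inv, Rdiv_eq_reg_r in H; lra.
  - rewrite H; reflexivity.
Qed.

End DeltaCBounds.

Lemma Rdiv_le_sub_denom (x y L : R) : 0 < x -> 0 <= y < L ->
  x / L <= x / (L - y) /\ (x / (L - y) = x / L <-> y = 0).
Proof.
  intros Hx Hy; split; [| split; intro H].
  - apply Rmult_le_compat_l; [lra |]; apply Rinv_le_contravar; lra.
  - apply Rdiv_eq_reg_l in H; lra.
  - rewrite H, Rminus_0_r; reflexivity.
Qed.

Theorem lemma4p1 (l u dQ eps delta : R)
  (Hlu : l < u) (HdQ0 : 0 < dQ) (HdQu : dQ <= u - l)
  (Heps : 0 <= eps) (Hd0 : 0 <= delta) (Hd1 : delta < 1)
  (Hne : exp eps / (1 - delta) > 1) :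
  let b0 := dQ / (eps - ln (1 - delta)) in
  1 <= DeltaC l u dQ b0 /\ DeltaC l u dQ b0 < exp eps / (1 - delta) /\
  eps - ln (DeltaC l u dQ b0) - ln (1 - delta) > 0 /\
  0 < f_map l u dQ eps delta b0 /\
  f_map l u dQ eps delta b0 >= b0 /\
  (f_map l u dQ eps delta b0 = b0 <-> dQ = u - l).
Proof.
  intro b0.
  set (L := eps - ln (1 - delta)) in b0.
  assert (HexpL : exp L = exp eps / (1 - delta)).
  { unfold L, Rminus; rewrite exp_plus, exp_Ropp, exp_ln by lra; reflexivity. }
  assert (HL : 0 < L).
  { rewrite <- HexpL, <- exp_0 in Hne; apply exp_lt_inv in Hne; lra. }
  assert (Hb0 : 0 < b0) by (apply Rdiv_lt_0_compat; assumption).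
  assert (HdQb0 : dQ / b0 = L) by (unfold b0; field; lra).
  assert (Hge1 := DeltaC_ge1 l u dQ b0 Hb0 HdQ0 HdQu).
  assert (Hlt := DeltaC_lt_exp l u dQ b0 Hb0 HdQ0 HdQu).
  rewrite HdQb0 in Hlt.
  set (D := DeltaC l u dQ b0) in *.
  assert (HlnD : 0 <= ln D < L).
  { split.
    - apply Rnot_lt_le; intro Hneg; apply exp_increasing in Hneg.
      rewrite exp_ln, exp_0 in Hneg; lra.
    - rewrite <- (ln_exp L); apply ln_increasing; lra. }
  assert (Hden : eps - ln D - ln (1 - delta) = L - ln D) by (unfold L; ring).
  assert (Hf : f_map l u dQ eps delta b0 = dQ / (L - ln D))
    by (unfold f_map; fold D; rewrite Hden; reflexivity).
  destruct (Rdiv_le_sub_denom dQ (ln D) L HdQ0 HlnD) as [Hle Heq].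
  fold b0 in Hle, Heq.
  rewrite Hf, Hden, <- HexpL.
  split; [exact Hge1 |]; split; [exact Hlt |]; split; [lra |].
  split; [apply Rdiv_lt_0_compat; lra |]; split; [lra |].
  rewrite Heq, <- ln_1; split; intro H.
  - apply (DeltaC_eq1 l u dQ b0); try assumption.
    fold D; apply ln_inv; [lra | lra | exact H].
  - unfold D; rewrite (proj2 (DeltaC_eq1 l u dQ b0 Hb0 HdQ0 HdQu) H); reflexivity.
Qed.
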